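(* Let $G=(V,E)$, the token alphabet, the test distribution $\mathcal{D}_{\mathrm{test}}$, the program $P_{\mathrm{prog}}$, its greedy generation $\mathrm{prog}(\cdot)$ and the decoding map $\mathrm{dec}$ be as in the context. For every $k\ge1$ and every input–label pair $(\widetilde{\mathtt{inp}}^k,\widetilde{\mathtt{lab}}^k)$ in the support of $\mathcal{D}_{\mathrm{test}}$, $\mathrm{dec}(\mathrm{prog}(\widetilde{\mathtt{inp}}^k))=\mathrm{dec}(\widetilde{\mathtt{lab}}^k)$. Consequently $\mathrm{prog}(\cdot)$ minimizes the few-shot testing losses $L^k_{\mathrm{test}}:=-\Pr_{\mathcal{D}_{\mathrm{test}}}\big[\mathrm{dec}(\mathrm{prog}(\widetilde{\mathtt{inp}}^k))=\mathrm{dec}(\widetilde{\mathtt{lab}}^k)\big]$, $k=1,\dots,K-1$.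
   Context: Causal structure. Let $\mathcal{V}_{\mathrm{all}}$ be a finite alphabet of vertex symbols and $G=(V,E)$ a directed graph with $V\subseteq\mathcal{V}_{\mathrm{all}}$. Every $v\in\mathcal{V}_{\mathrm{all}}$ has a finite value set $\mathtt{VALS}(v)\subset\mathbb{Z}$ and a finite nonempty set $\mathtt{CONT}(v)$ of context tokens; these sets are pairwise disjoint and disjoint from vertex and value symbols. Each edge $e=(v_1,v_2)\in E$ carries an operation $\mathtt{op}(e)$ of the form $q\mapsto q+c_e$ ($c_e\in\mathbb{Z}$) mapping $\mathtt{VALS}(v_1)$ into $\mathtt{VALS}(v_2)$. Chains are $\mathcal{T}(G)=\{[v_1,\dots,v_n]:(v_i,v_{i+1})\in E\}$; the depth $N$ is the maximal chain length. Special tokens: $o^{\mathrm{eq}}$ (''=''), $o^{\mathrm{cm}}$ ('',''), $o^{\mathrm{qu}}$ (''?''), $o^{\mathrm{dlm}}$ (newline). Test sequences: a chain $[v_1,\dots,v_N]\in\mathcal{T}(G)$ of length $N$ with $q_1\sim\mathrm{Uniform}(\mathtt{VALS}(v_1))$ and $q_i=\mathtt{op}(v_{i-1},v_i)(q_{i-1})$, giving $[v_1,q_1,\dots,v_N,q_N]$. Processing: $[v_1,q_1,\dots,v_L,q_L]$ becomes $[v_L,o^{\mathrm{eq}},o^{\mathrm{qu}},c(v_1)_1,\dots,c(v_1)_{l_1},v_1,o^{\mathrm{eq}},q_1,o^{\mathrm{cm}},\dots,o^{\mathrm{cm}},c(v_L)_1,\dots,c(v_L)_{l_L},v_L,o^{\mathrm{eq}},q_L]$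 with independently $l_i\sim\mathrm{Uniform}\{1,\dots,|\mathtt{CONT}(v_i)|\}$ and $c(v_i)_1,\dots,c(v_i)_{l_i}$ drawn from $\mathtt{CONT}(v_i)$ without replacement. For $k\in\{0,\dots,K\}$, take $k+1$ test sequences with the same vertex list and independent values/context tokens; $\widetilde{\mathtt{inp}}^k$ is $\widetilde{\mathtt{seq}}^{(1)},o^{\mathrm{dlm}},\dots,o^{\mathrm{dlm}},\widetilde{\mathtt{seq}}^{(k)},o^{\mathrm{dlm}}$ followed by the prefix $[v_N,o^{\mathrm{eq}},o^{\mathrm{qu}},c(v_1)^{(k+1)}_{1..l_1},v_1,o^{\mathrm{eq}},q^{(k+1)}_1,o^{\mathrm{cm}}]$ of the processed $(k+1)$-th sequence; $\widetilde{\mathtt{lab}}^k$ is the remainder of that processed sequence. This defines $\mathcal{D}_{\mathrm{test}}$. The map $\mathrm{dec}$ extracts from a processed token string the list of vertex–value pairs $[v_2,q_2,\dots,v_N,q_N]$ (the vertex and value in each occurrence of ''vertex, $o^{\mathrm{eq}}$, value''). Program $P_{\mathrm{prog}}(\cdot\mid z_{1:T})$ (for sentences with at least one complete previous shot): (i) if $z_T=o^{\mathrm{cm}}$, then $z_{T-3}$ is a vertex $v_i$; find $v_i$ in previous shots and the vertex $v_{i+1}$ following it; output $\mathrm{Uniform}(\mathtt{CONT}(v_{i+1}))$. (ii) if $z_{T-k+1:T}=[c(v_j)_1,\dots,c(v_j)_k]$ is a run of context tokens of $v_j$, output $\mathrm{Uniform}(\mathtt{CONT}(v_j)\cup\{v_j\}\setminus\{c(v_j)_1,\dots,c(v_j)_k\})$.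 (iii) if $z_T$ is a vertex, output $o^{\mathrm{eq}}$ with probability 1. (iv) if $z_T=o^{\mathrm{eq}}$, $z_{T-1}=v_j$: if $v_j\notin V$ or $v_j$ is the first vertex of $V$ in the current sequence, output $\mathrm{Uniform}(\mathtt{VALS}(v_j))$; otherwise, with $v_{j_1}$ (value $q_{j_1}$) the nearest preceding vertex of $V$ in the current sequence, output $\mathtt{op}(v_{j_1},v_j)(q_{j_1})$ with probability 1. (v) if $z_T$ is a value, output $o^{\mathrm{cm}}$ with probability 1. The generation $\mathrm{prog}(\widetilde{\mathtt{inp}}^k)$ is greedy decoding: repeatedly append a token of maximal probability under $P_{\mathrm{prog}}$ (ties broken arbitrarily), until the value of the goal vertex (the vertex named at the start of the current sequence) has been produced. *)

From HB Require Import structures.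
From mathcomp Require Import all_boot all_order all_algebra.
Set Implicit Arguments. Unset Strict Implicit. Unset Printing Implicit Defensive.
Import Order.TTheory GRing.Theory Num.Theory.
Local Open Scope ring_scope.

(* Token alphabet over a vertex alphabet Vt:
   vertex symbols, value symbols (integers), context tokens
   (Ctx v i is the i-th context token of vertex v; CONT(v) = {Ctx v i | i < ncont v},
   so the CONT(v) are pairwise disjoint and disjoint from vertices/values),
   and the special tokens "=", ",", "?", newline. *)
Inductive token (Vt : Type) :=
  | Vert of Vt | Val of int | Ctx of Vt & nat | TEq | TCm | TQu | TDlm.
Arguments Vert {Vt}. Arguments Val {Vt}. Arguments Ctx {Vt}.
Arguments TEq {Vt}. Arguments TCm {Vt}. Arguments TQu {Vt}. Arguments TDlm {Vt}.

Section TokEq.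
Variable Vt : eqType.
Definition token_eqb (a b : token Vt) : bool :=
  match a, b with
  | Vert u, Vert v => u == v
  | Val x, Val y => x == y
  | Ctx u i, Ctx v j => (u == v) && (i == j)
  | TEq, TEq | TCm, TCm | TQu, TQu | TDlm, TDlm => true
  | _, _ => false
  end.
Lemma token_eqP : Equality.axiom token_eqb.
Proof.
case=> [u|x|u i| | | |] [v|y|v j| | | |] /=; try by constructor.
- by apply: (iffP eqP) => [->|[]].
- by apply: (iffP eqP) => [->|[]].
- by apply: (iffP andP) => [[/eqP-> /eqP->]|[-> ->]].
Qed.
HB.instance Definition _ := hasDecEq.Build (token Vt) token_eqP.
End TokEq.

Section Setting.
Variable Vt : finType.
Variable inV : pred Vt.
Variable E : rel Vt.
Variable c : Vt -> Vt -> int.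
Variable vals : Vt -> seq int.
Variable ncont : Vt -> nat.

Local Notation tok := (token Vt).

Definition op (u v : Vt) (q : int) : int := q + c u v.
Definition CONT (v : Vt) : seq tok := [seq Ctx v i | i <- iota 0 (ncont v)].
Definition VALS (v : Vt) : seq tok := [seq Val q | q <- vals v].

Definition unif (s : seq tok) : option (tok -> rat) :=
  if undup s is [::] then None
  else Some (fun t => if t \in s then (size (undup s))%:R^-1 else 0).
Definition point (t0 : tok) : tok -> rat := fun t => if t == t0 then 1 else 0.

(* the current sequence: tokens after the last newline *)
Fixpoint current (z : seq tok) : seq tok :=
  match z with
  | [::] => [::]
  | t :: z' => if TDlm \in z' then current z' else if t == TDlm then z' else z
  end.
(* the previous shots: everything up to and including the last newline *)
Definition prev_shots (z : seq tok) : seq tok := take (size z - size (current z)) z.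

Fixpoint first_vert (s : seq tok) : option Vt :=
  match s with
  | [::] => None
  | Vert v :: _ => Some v
  | _ :: s' => first_vert s'
  end.

Definition isVinV (t : tok) : bool := if t is Vert v then inV v else false.
Definition isCtxOf (u : Vt) (t : tok) : bool := if t is Ctx w _ then w == u else false.

Definition rule_i (z : seq tok) (vi : Vt) : option (tok -> rat) :=
  let p := prev_shots z in
  let i := index (Vert vi) p in
  if (i < size p)%N then
    match first_vert (drop i.+1 p) with
    | Some w => unif (CONT w)
    | None => None
    end
  else None.

(* rule (ii): maximal trailing run of context tokens of u *)
Definition rule_ii (rz : seq tok) (u : Vt) : option (tok -> rat) :=
  let run := take (find (fun t => ~~ isCtxOf u t) rz) rz in
  unif [seq t <- CONT u ++ [:: Vert u] | t \notin run].

(* rule (iv): z_T is "=", z_{T-1} is a vertex v_j (rb = reversed part of the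
   current sequence strictly before that occurrence of v_j) *)
Definition rule_iv (vj : Vt) (rb : seq tok) : option (tok -> rat) :=
  if ~~ inV vj || ~~ has isVinV rb then unif (VALS vj)
  else
    let k := find isVinV rb in
    match nth TDlm rb k, rev (take k rb) with
    | Vert u, TEq :: Val q :: _ => Some (point (Val (op u vj q)))
    | _, _ => None
    end.

(* The program P_prog(. | z); None = not defined on this sentence. *)
Definition Pprog (z : seq tok) : option (tok -> rat) :=
  if TDlm \notin z then None else
  match rev z with
  | TCm :: _ :: _ :: Vert vi :: _ => rule_i z vi
  | (Ctx u _ :: _) as rz => rule_ii rz u
  | Vert _ :: _ => Some (point TEq)
  | TEq :: Vert _ :: _ =>
      match rev (current z) with
      | TEq :: Vert vj :: rb => rule_iv vj rb
      | _ => None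
      end
  | Val _ :: _ => Some (point TCm)
  | _ => None
  end.

Definition is_argmax (P : tok -> rat) (t : tok) : Prop := forall t', P t' <= P t.

(* the value of the goal vertex (named at the start of the current sequence)
   has just been produced *)
Definition goal_done (z : seq tok) : bool :=
  match current z, rev (current z) with
  | Vert g :: _, Val _ :: TEq :: Vert v :: _ => v == g
  | _, _ => false
  end.

(* out is a greedy generation of prog from inp (for some tie breaking):
   each appended token has maximal probability under P_prog, generation
   stops exactly when the goal value has first been produced. *)
Definition greedy_gen (inp out : seq tok) : Prop :=
  [/\ forall i, (i < size out)%N ->
        exists P, Pprog (inp ++ take i out) = Some P /\ is_argmax P (nth TDlm out i),
      forall i, (i < size out)%N -> ~~ goal_done (inp ++ take i out)
    & goal_done (inp ++ out)].

Fixpoint dec (s : seq tok) : seq (Vt * int) :=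
  match s with
  | Vert v :: TEq :: Val q :: s' => (v, q) :: dec s'
  | _ :: s' => dec s'
  | [::] => [::]
  end.

Definition is_chain (ws : seq Vt) : bool :=
  if ws is w :: ws' then all inV ws && path E w ws' else false.

(* values q_2..q_n along the chain v :: vs starting from value q of v *)
Fixpoint chain_vals (v : Vt) (q : int) (vs : seq Vt) : seq int :=
  match vs with
  | [::] => [::]
  | w :: ws => op v w q :: chain_vals w (op v w q) ws
  end.

(* a possible draw of the context tokens c(v)_1..c(v)_l, l in {1..|CONT v|},
   drawn without replacement *)
Definition ctx_ok (v : Vt) (cs : seq tok) : bool :=
  [&& (0 < size cs)%N, uniq cs & all (fun t => t \in CONT v) cs].

(* a test shot for chain v1 :: vs: the initial value q1 and context lists *)
Definition shot_ok (v1 : Vt) (vs : seq Vt) (sh : int * seq (seq tok)) : bool :=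
  [&& sh.1 \in vals v1, size sh.2 == size (v1 :: vs)
    & all (fun p => ctx_ok p.1 p.2) (zip (v1 :: vs) sh.2)].

Fixpoint joincm (bs : seq (seq tok)) : seq tok :=
  match bs with
  | [::] => [::]
  | [:: b] => b
  | b :: bs' => b ++ TCm :: joincm bs'
  end.

Definition blocks (v1 : Vt) (vs : seq Vt) (sh : int * seq (seq tok)) : seq (seq tok) :=
  [seq p.1.2 ++ [:: Vert p.1.1; TEq; Val p.2]
  | p <- zip (zip (v1 :: vs) sh.2) (sh.1 :: chain_vals v1 sh.1 vs)].

Definition header (v1 : Vt) (vs : seq Vt) : seq tok := [:: Vert (last v1 vs); TEq; TQu].

Definition processed (v1 : Vt) (vs : seq Vt) (sh : int * seq (seq tok)) : seq tok :=
  header v1 vs ++ joincm (blocks v1 vs sh).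

(* (inp^k, lab^k) built from k+1 shots (the last one is the query shot) *)
Definition test_input (k : nat) (v1 : Vt) (vs : seq Vt) (shots : seq (int * seq (seq tok)))
  : seq tok :=
  flatten [seq processed v1 vs sh ++ [:: TDlm] | sh <- take k shots] ++
  (let qs := nth (0, [::]) shots k in
   header v1 vs ++ head [::] (blocks v1 vs qs) ++ [:: TCm]).

Definition test_label (k : nat) (v1 : Vt) (vs : seq Vt) (shots : seq (int * seq (seq tok)))
  : seq tok :=
  joincm (behead (blocks v1 vs (nth (0, [::]) shots k))).

End Setting.

From HB Require Import structures.
From mathcomp Require Import all_boot all_order all_algebra.
From mathcomp Require Import zify.
Set Implicit Arguments. Unset Strict Implicit. Unset Printing Implicit Defensive.
Import Order.TTheory GRing.Theory Num.Theory.

(* In every previous shot the vertices appear as g, v1, ..., vN, where g = vN is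
   the goal.  A chain of maximal length repeats no vertex (otherwise its cycle
   could be traversed twice), so for i < N the first occurrence of v_i in the
   previous shots lies in the first shot and is followed there by v_(i+1).  Hence
   from a sentence ending in "v_i = q ," the program emits context tokens of
   v_(i+1), each remaining one tying with v_(i+1) itself for maximal probability,
   until it emits v_(i+1); then "=", then op(v_i, v_(i+1)) q by rule (iv), and it
   stops exactly when v_(i+1) = g.  So every greedy generation decodes to the
   vertex-value pairs of the label, and one context token per block already gives
   a greedy generation. *)

Section Tokens.
Variable Vt : finType.
Local Notation tok := (token Vt).

Lemma unif_argmax (s : seq tok) : s != [::] ->
  exists2 P, unif s = Some P & forall a, is_argmax P a <-> a \in s.
Proof.
case: s => [//|y0 s] _; rewrite /unif.
have y0s : y0 \in undup (y0 :: s) by rewrite mem_undup mem_head.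
case Es: (undup _) y0s => [//|y l] _.
exists (fun t => if t \in y0 :: s then (size (y :: l))%:R^-1 else 0)%R => // a.
have Pgt0 : (0 < (size (y :: l))%:R^-1 :> rat)%R by rewrite invr_gt0 ltr0n.
split=> [maxa | sa t]; last by rewrite sa; case: ifP => // _; exact: ltW.
apply: contraT => /negbTE sa; have := maxa y.
by rewrite sa -mem_undup Es mem_head leNgt Pgt0.
Qed.

Lemma point_argmax (t0 a : tok) : is_argmax (point t0) a <-> a = t0.
Proof.
rewrite /is_argmax /point; split=> [maxa | -> t]; last by rewrite eqxx; case: eqP; rewrite ?ler01.
by apply/eqP; have := maxa t0; rewrite eqxx; case: eqP; rewrite ?ler10.
Qed.

Lemma current_cat (x s : seq tok) : TDlm \notin s -> current (x ++ TDlm :: s) = s.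
Proof.
move=> s_dlm; elim: x => [|t x IHx] /=; first by rewrite (negbTE s_dlm).
by rewrite mem_cat mem_head orbT IHx.
Qed.

Lemma prev_shots_cat (x s : seq tok) : TDlm \notin s ->
  prev_shots (x ++ TDlm :: s) = rcons x TDlm.
Proof.
move=> s_dlm; rewrite /prev_shots current_cat // size_cat /= addnS -addSn addnK.
by rewrite -cat_rcons take_size_cat ?size_rcons.
Qed.

Definition vert_of (t : tok) : option Vt := if t is Vert v then Some v else None.
Definition verts (s : seq tok) : seq Vt := pmap vert_of s.

Lemma verts_cat (s t : seq tok) : verts (s ++ t) = verts s ++ verts t.
Proof. exact: pmap_cat. Qed.

Lemma mem_verts (u : Vt) (s : seq tok) : (Vert u \in s) = (u \in verts s).
Proof. by elim: s => [|[v|x|v i| | | |] s IHs] //=; rewrite !inE IHs. Qed.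

Lemma first_vertE (s : seq tok) : first_vert s = ohead (verts s).
Proof. by elim: s => [|[v|x|v i| | | |] s IHs]. Qed.

Lemma eq_Vert (u v : Vt) : (Vert u == Vert v :> tok) = (u == v).
Proof. by []. Qed.

Lemma verts_drop_index (u : Vt) (s : seq tok) :
  verts (drop (index (Vert u) s).+1 s) = drop (index u (verts s)).+1 (verts s).
Proof.
elim: s => [|[v|x|v i| | | |] s IHs] //=.
by case: (eqVneq v u) => [->|neq]; rewrite eq_Vert ?eqxx ?drop0 // (negbTE neq).
Qed.

Definition next_in (s : seq Vt) (u : Vt) : option Vt :=
  if u \in s then ohead (drop (index u s).+1 s) else None.

Lemma rule_iE (z : seq tok) (ncont : Vt -> nat) (u : Vt) :
  rule_i ncont z u =
  if next_in (verts (prev_shots z)) u is Some w then unif (CONT ncont w) else None.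
Proof.
rewrite /rule_i /next_in -mem_verts index_mem; case: ifP => // _.
by rewrite first_vertE verts_drop_index.
Qed.

Lemma verts_ctx (w : Vt) (cs : seq tok) : all (isCtxOf w) cs -> verts cs = [::].
Proof. by elim: cs => [|[] // v i cs IHcs] //= /andP [_ /IHcs]. Qed.

Lemma dec_ctx_cat (w : Vt) (cs s : seq tok) : all (isCtxOf w) cs -> dec (cs ++ s) = dec s.
Proof. by elim: cs => [|[] // v i cs IHcs] //= /andP [_ /IHcs]. Qed.

Lemma dlm_notin_ctx (w : Vt) (cs : seq tok) : all (isCtxOf w) cs -> TDlm \notin cs.
Proof. by move=> cs_w; apply/negP => /(allP cs_w). Qed.

Lemma CONT_ctx (ncont : Vt -> nat) (w : Vt) (a : tok) :
  a \in CONT ncont w -> exists i, a = Ctx w i.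
Proof. by case/mapP => i _ ->; exists i. Qed.

Lemma CONT_isCtxOf (ncont : Vt -> nat) (w : Vt) (a : tok) :
  a \in CONT ncont w -> isCtxOf w a.
Proof. by case/CONT_ctx => i ->; rewrite /= eqxx. Qed.

End Tokens.

Section Greedy.
Variables (Vt : finType) (inV : pred Vt) (c : Vt -> Vt -> int).
Variables (vals : Vt -> seq int) (ncont : Vt -> nat).
Local Notation tok := (token Vt).

Definition next_tok (z : seq tok) (a : tok) : Prop :=
  exists2 P, Pprog inV c vals ncont z = Some P & is_argmax P a.

Fixpoint greedy_from (z out : seq tok) : Prop :=
  if out is a :: r then [/\ ~~ goal_done z, next_tok z a & greedy_from (rcons z a) r]
  else goal_done z.

Lemma greedy_genE (inp out : seq tok) :
  greedy_gen inV c vals ncont inp out <-> greedy_from inp out.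
Proof.
elim: out inp => [|a out IH] inp /=.
  rewrite /greedy_gen cats0; split=> [[] // | done_inp].
  by split=> // i; rewrite ltn0.
rewrite /greedy_gen; split.
- case=> steps undone done_end; split.
  + by have := undone 0%N isT; rewrite cats0.
  + by have [P [Pz maxP]] := steps 0%N isT; exists P; rewrite // -(cats0 inp).
  + apply/IH; split=> [i lti | i lti |]; last by rewrite cat_rcons.
    * by have := steps i.+1 lti; rewrite /= -cat_rcons.
    * by have := undone i.+1 lti; rewrite /= -cat_rcons.
- case=> undone0 step0 /IH [steps undone done_end]; split; last by rewrite -cat_rcons.
  + case=> [|i] lti; last by rewrite /= -cat_rcons; apply: steps.
    by case: step0 => P Pz maxP; exists P; rewrite cats0.
  + by case=> [|i] lti; rewrite ?cats0 //= -cat_rcons; apply: undone.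
Qed.

Lemma next_tok_unif (z s : seq tok) (a : tok) :
  Pprog inV c vals ncont z = unif s -> s != [::] -> next_tok z a <-> a \in s.
Proof.
move=> Pz /unif_argmax [P Ps maxP]; rewrite -maxP /next_tok Pz Ps.
by split=> [[_ [<-]] | ]; [| exists P].
Qed.

Lemma next_tok_point (z : seq tok) (t a : tok) :
  Pprog inV c vals ncont z = Some (point t) -> next_tok z a <-> a = t.
Proof.
move=> Pz; rewrite -point_argmax /next_tok Pz.
by split=> [[_ [<-]] | ]; [| exists (point t)].
Qed.

End Greedy.

Section Rules.
Variables (Vt : finType) (inV : pred Vt) (c : Vt -> Vt -> int).
Variables (vals : Vt -> seq int) (ncont : Vt -> nat).
Local Notation tok := (token Vt).
Local Notation Pprog := (Pprog inV c vals ncont).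
Variable x : seq tok.

Lemma mem_dlm_cat (Y : seq tok) : TDlm \in x ++ TDlm :: Y.
Proof. by rewrite mem_cat mem_head orbT. Qed.

Lemma rev_dlm_cat (X l : seq tok) : rev (x ++ TDlm :: X ++ l) = rev l ++ rev (x ++ TDlm :: X).
Proof. by rewrite -cat_cons catA rev_cat. Qed.

Lemma Pprog_comma (X : seq tok) (u w : Vt) (q : int) :
  TDlm \notin X -> next_in (verts (rcons x TDlm)) u = Some w ->
  Pprog (x ++ TDlm :: X ++ [:: Vert u; TEq; Val q; TCm]) = unif (CONT ncont w).
Proof.
move=> X_dlm uw; rewrite /Pprog mem_dlm_cat rev_dlm_cat /= rule_iE prev_shots_cat ?uw //.
by rewrite mem_cat negb_or X_dlm.
Qed.

Lemma Pprog_ctx (X r : seq tok) (w : Vt) (i : nat) : all (isCtxOf w) r ->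
  Pprog (x ++ TDlm :: X ++ TCm :: rcons r (Ctx w i)) =
  unif [seq t <- CONT ncont w ++ [:: Vert w] | t \notin rcons r (Ctx w i)].
Proof.
move=> r_w; rewrite /Pprog mem_dlm_cat rev_dlm_cat rev_cons rev_rcons /= cat_rcons /rule_ii.
set rz := Ctx w i :: _.
have -> : take (find (fun t => ~~ isCtxOf w t) rz) rz = Ctx w i :: rev r.
  rewrite /rz /= eqxx /= find_cat has_rev.
  have -> : has (fun t => ~~ isCtxOf w t) r = false.
    by apply/negbTE; rewrite -all_predC; apply: sub_all r_w => t; rewrite /= negbK.
  by rewrite /= addn0 take_size_cat.
by congr unif; apply: eq_filter => t; rewrite !inE mem_rev mem_rcons inE.
Qed.

Lemma Pprog_vert (X : seq tok) (w : Vt) :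
  Pprog (x ++ TDlm :: rcons X (Vert w)) = Some (point TEq).
Proof. by rewrite /Pprog mem_dlm_cat -cats1 rev_dlm_cat. Qed.

Lemma Pprog_val (X : seq tok) (q : int) :
  Pprog (x ++ TDlm :: rcons X (Val q)) = Some (point TCm).
Proof. by rewrite /Pprog mem_dlm_cat -cats1 rev_dlm_cat. Qed.

Lemma Pprog_eq (X run : seq tok) (u w : Vt) (q : int) :
  TDlm \notin X -> all (isCtxOf w) run -> inV u -> inV w ->
  Pprog (x ++ TDlm :: X ++ [:: Vert u; TEq; Val q; TCm] ++ run ++ [:: Vert w; TEq]) =
  Some (point (Val (op c u w q))).
Proof.
(* context tokens are not vertices, so rule (iv) looks back to u *)
move=> X_dlm run_w Vu Vw; rewrite /Pprog mem_dlm_cat catA rev_dlm_cat /=.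
rewrite current_cat; last by rewrite !mem_cat !negb_or X_dlm (dlm_notin_ctx run_w).
rewrite !rev_cat /= /rule_iv Vw /=.
have run_nV : has (isVinV inV) (rev run) = false.
  by apply/negbTE; rewrite has_rev -all_predC; apply: sub_all run_w => -[].
rewrite has_cat run_nV /= Vu /= find_cat run_nV /= Vu size_rev.
rewrite nth_cat size_rev ltnNge leq_addr /= addKn /= take_cat size_rev ltnNge leq_addr /= addKn.
by rewrite rev_cat.
Qed.

End Rules.

Section Generation.
Variables (Vt : finType) (inV : pred Vt) (c : Vt -> Vt -> int).
Variables (vals : Vt -> seq int) (ncont : Vt -> nat).
Local Notation tok := (token Vt).
Local Notation next_tok := (next_tok inV c vals ncont).
Local Notation greedy_from := (greedy_from inV c vals ncont).

Variables (x : seq tok) (gl : Vt) (ch R : seq Vt).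
Hypothesis prev_verts : verts (rcons x TDlm) = gl :: ch ++ R.
Hypothesis ch_uniq : uniq ch.
Hypothesis ch_last : last gl ch = gl.
Hypothesis ch_inV : all inV ch.
Hypothesis ncont_gt0 : forall v, (0 < ncont v)%N.

(* x is the text up to the last newline, gl the goal vertex opening the current
   sequence Vert gl :: Y. *)
Definition sentence (Y : seq tok) : seq tok := x ++ TDlm :: Vert gl :: Y.

Lemma rcons_sentence (Y : seq tok) (a : tok) : rcons (sentence Y) a = sentence (rcons Y a).
Proof. by rewrite /sentence rcons_cat. Qed.

Lemma goal_done_sentence (Y : seq tok) : TDlm \notin Y ->
  goal_done (sentence Y) =
  if rev (Vert gl :: Y) is [:: Val _, TEq, Vert v & _] then v == gl else false.
Proof. by move=> Y_dlm; rewrite /goal_done current_cat ?inE. Qed.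

Lemma next_in_chain (pfx : seq Vt) (u w : Vt) (ws : seq Vt) :
  ch = pfx ++ u :: w :: ws -> next_in (gl :: ch ++ R) u = Some w.
Proof.
move=> ch_u; move: ch_uniq ch_last; rewrite ch_u cat_uniq last_cat /=.
case/and3P=> _ pfx_u /andP [u_ws _] last_ws.
have u_gl : u != gl by apply: contraNneq u_ws => ->; rewrite -last_ws mem_last.
have u_pfx : u \notin pfx by apply: contra pfx_u => u_pfx; rewrite /= u_pfx.
rewrite /next_in -catA in_cons (negbTE u_gl) mem_cat mem_head orbT /=.
rewrite eq_sym (negbTE u_gl) index_cat (negbTE u_pfx) /= eqxx addn0.
by rewrite drop_cat ltnNge leqnSn subSnn.
Qed.

Lemma goal_is_last (pfx : seq Vt) (u w : Vt) (ws : seq Vt) :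
  ch = pfx ++ u :: w :: ws -> (w == gl) = (ws == [::]).
Proof.
move=> ch_u; move: ch_uniq ch_last; rewrite ch_u cat_uniq last_cat /=.
case/and3P=> _ _ /andP [_ /andP [w_ws _]] <-.
case: ws {ch_u} w_ws => [|w2 ws] /=; first by rewrite eqxx.
by apply: contraNF => /eqP ->; rewrite mem_last.
Qed.

Lemma next_tok_vert (Y : seq tok) (v : Vt) (a : tok) :
  next_tok (sentence (rcons Y (Vert v))) a <-> a = TEq.
Proof. by apply: next_tok_point; exact: (@Pprog_vert _ inV c vals ncont x (Vert gl :: Y)). Qed.

Lemma next_tok_val (Y : seq tok) (p : int) (a : tok) :
  next_tok (sentence (rcons Y (Val p))) a <-> a = TCm.
Proof. by apply: next_tok_point; exact: (@Pprog_val _ inV c vals ncont x (Vert gl :: Y)). Qed.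

Lemma undone_sentence (Y : seq tok) (a : tok) : TDlm \notin rcons Y a ->
  (if a is Val _ then false else true) -> ~~ goal_done (sentence (rcons Y a)).
Proof. by move=> Y_dlm; rewrite goal_done_sentence // -rcons_cons rev_rcons; case: a {Y_dlm}. Qed.

(* the current sequence has just closed the block of u (value q) with a comma, and
   ws lists the chain vertices still to be generated *)
Definition at_block (Y : seq tok) (u : Vt) (q : int) (ws : seq Vt) : Prop :=
  [/\ TDlm \notin Y, exists X, Y = X ++ [:: Vert u; TEq; Val q; TCm]
    & exists pfx, ch = pfx ++ u :: ws].

Section Block.
Variables (Y : seq tok) (u w : Vt) (q : int) (ws : seq Vt).
Hypothesis Y_block : at_block Y u q (w :: ws).
Local Notation q' := (op c u w q).

Lemma dlm_notin_block (run l : seq tok) : all (isCtxOf w) run -> TDlm \notin l ->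
  TDlm \notin Y ++ run ++ l.
Proof.
case: Y_block => Y_dlm _ _ run_w l_dlm.
by rewrite !mem_cat !negb_or Y_dlm l_dlm (dlm_notin_ctx run_w).
Qed.

Lemma next_tok_block_start (a : tok) : next_tok (sentence Y) a <-> a \in CONT ncont w.
Proof.
case: Y_block => Y_dlm [X eY] [pfx ch_u].
apply: next_tok_unif; last by rewrite -size_eq0 size_map size_iota -lt0n.
rewrite /sentence eY; apply: (@Pprog_comma _ inV c vals ncont x (Vert gl :: X)).
  by move: Y_dlm; rewrite eY mem_cat negb_or => /andP [].
by rewrite prev_verts (next_in_chain ch_u).
Qed.

Lemma undone_block_start : ~~ goal_done (sentence Y).
Proof.
case: Y_block => Y_dlm [X eY] _.
have {}eY : Y = rcons (X ++ [:: Vert u; TEq; Val q]) TCm by rewrite eY -cats1 -catA.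
by rewrite eY in Y_dlm *; apply: undone_sentence.
Qed.

Lemma next_tok_ctx (r : seq tok) (i : nat) (a : tok) : all (isCtxOf w) r ->
  next_tok (sentence (Y ++ rcons r (Ctx w i))) a <->
  a \in CONT ncont w /\ a \notin rcons r (Ctx w i) \/ a = Vert w.
Proof.
case: Y_block => _ [X eY] _ r_w.
have Vw_notin : Vert w \notin rcons r (Ctx w i).
  by rewrite mem_rcons inE negb_or /=; apply/negP => /(allP r_w).
rewrite (@next_tok_unif _ _ _ _ _ _
  [seq t <- CONT ncont w ++ [:: Vert w] | t \notin rcons r (Ctx w i)]).
- rewrite mem_filter mem_cat inE andb_orr andbC; split.
    by case/orP=> [/andP [-> ->] | /andP [_ /eqP ->]]; [left | right].
  by case=> [[-> ->] | ->]; rewrite ?Vw_notin ?eqxx ?orbT.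
- have -> : Y ++ rcons r (Ctx w i) = (X ++ [:: Vert u; TEq; Val q]) ++ TCm :: rcons r (Ctx w i).
    by rewrite eY -!catA.
  exact: (@Pprog_ctx _ inV c vals ncont x (Vert gl :: X ++ [:: Vert u; TEq; Val q])).
- by rewrite -has_filter; apply/hasP; exists (Vert w); rewrite // mem_cat mem_head orbT.
Qed.

Lemma undone_ctx (r : seq tok) (i : nat) : all (isCtxOf w) r ->
  ~~ goal_done (sentence (Y ++ rcons r (Ctx w i))).
Proof.
move=> r_w; rewrite -rcons_cat; apply: undone_sentence => //.
by rewrite rcons_cat -cats1; apply: dlm_notin_block.
Qed.

Lemma next_tok_eq (run : seq tok) (a : tok) : all (isCtxOf w) run ->
  next_tok (sentence (Y ++ run ++ [:: Vert w; TEq])) a <-> a = Val q'.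
Proof.
case: Y_block => Y_dlm [X eY] [pfx ch_u] run_w.
have /andP [Vu Vw] : inV u && inV w.
  by move: ch_inV; rewrite ch_u all_cat /= => /and3P [_ -> /andP [-> _]].
apply: next_tok_point; rewrite /sentence eY -catA.
apply: (@Pprog_eq _ inV c vals ncont x (Vert gl :: X)) => //.
by move: Y_dlm; rewrite eY mem_cat negb_or => /andP [].
Qed.

Lemma goal_done_value (run : seq tok) : all (isCtxOf w) run ->
  goal_done (sentence (Y ++ run ++ [:: Vert w; TEq; Val q'])) = (ws == [::]).
Proof.
case: Y_block => _ _ [pfx ch_u] run_w.
rewrite goal_done_sentence ?dlm_notin_block // -cat_cons catA rev_cat /=.
exact: goal_is_last ch_u.
Qed.

Lemma next_tok_block_vert (run : seq tok) (a : tok) :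
  next_tok (sentence (Y ++ run ++ [:: Vert w])) a <-> a = TEq.
Proof. by rewrite catA cats1; apply: next_tok_vert. Qed.

Lemma undone_block_vert (run : seq tok) : all (isCtxOf w) run ->
  ~~ goal_done (sentence (Y ++ run ++ [:: Vert w])).
Proof. by move=> run_w; rewrite catA cats1 undone_sentence // -cats1 -catA dlm_notin_block. Qed.

Lemma undone_block_eq (run : seq tok) : all (isCtxOf w) run ->
  ~~ goal_done (sentence (Y ++ run ++ [:: Vert w; TEq])).
Proof.
move=> run_w; rewrite -[[:: Vert w; TEq]]/([:: Vert w] ++ [:: TEq]) !catA cats1.
by rewrite undone_sentence // -cats1 -!catA dlm_notin_block.
Qed.

Lemma next_tok_block_val (run : seq tok) (a : tok) :
  next_tok (sentence (Y ++ run ++ [:: Vert w; TEq; Val q'])) a <-> a = TCm.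
Proof.
rewrite -[[:: Vert w; TEq; Val q']]/([:: Vert w; TEq] ++ [:: Val q']) !catA cats1.
exact: next_tok_val.
Qed.

Lemma greedy_from_ctx_run (r : seq tok) (i : nat) (out : seq tok) : all (isCtxOf w) r ->
  greedy_from (sentence (Y ++ rcons r (Ctx w i))) out ->
  exists run o, [/\ all (isCtxOf w) run, rcons r (Ctx w i) ++ out = run ++ Vert w :: o
    & greedy_from (sentence (Y ++ run ++ [:: Vert w])) o].
Proof.
elim: out r i => [|a out IH] r i r_w /=; first by move/negP: (undone_ctx i r_w).
case=> _ /(next_tok_ctx i a r_w) [[/CONT_ctx [j ->] _] | ->]; rewrite rcons_sentence => g.
  have /IH [|run [o [run_w e g']]] :
      greedy_from (sentence (Y ++ rcons (rcons r (Ctx w i)) (Ctx w j))) out.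
  - by rewrite -rcons_cat.
  - by rewrite all_rcons /= eqxx.
  by exists run, o; rewrite -cat_rcons.
exists (rcons r (Ctx w i)), out; split=> //; first by rewrite all_rcons /= eqxx.
by rewrite cats1 -rcons_cat.
Qed.

Lemma greedy_from_block (out : seq tok) : greedy_from (sentence Y) out ->
  exists run o, [/\ all (isCtxOf w) run, out = run ++ [:: Vert w; TEq; Val q'] ++ o
    & greedy_from (sentence (Y ++ run ++ [:: Vert w; TEq; Val q'])) o].
Proof.
case: out => [|a out] /=; first by move/negP: undone_block_start.
case=> _ /next_tok_block_start /CONT_ctx [i ->]; rewrite rcons_sentence -cats1.
case/(greedy_from_ctx_run (r := [::])) => // run [o [run_w /= -> ]].
case: o => [|b o] /=; first by move/negP: (undone_block_vert run_w).
case=> _ /(next_tok_block_vert run b) ->; rewrite rcons_sentence -cats1 -!catA.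
case: o => [|d o] /=; first by move/negP: (undone_block_eq run_w).
case=> _ /(next_tok_eq _ run_w) ->; rewrite rcons_sentence -cats1 -!catA => g.
by exists run, o.
Qed.

Lemma greedy_from_block_cat (o : seq tok) :
  greedy_from (sentence (Y ++ [:: Ctx w 0; Vert w; TEq; Val q'])) o ->
  greedy_from (sentence Y) ([:: Ctx w 0; Vert w; TEq; Val q'] ++ o).
Proof.
have ctx0_w : all (isCtxOf w) [:: Ctx w 0] by rewrite /= eqxx.
move=> g; rewrite /= !rcons_sentence -!cats1 -!catA /=.
split; first exact: undone_block_start.
  by apply/next_tok_block_start; rewrite /CONT map_f // mem_iota add0n ncont_gt0.
split; first exact: (undone_ctx 0 (r := [::])).
  by apply/(next_tok_ctx 0 _ (r := [::])) => //; right.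
split; [exact: (undone_block_vert ctx0_w) | exact/(next_tok_block_vert [:: Ctx w 0]) |].
by split; [exact: (undone_block_eq ctx0_w) | exact/(next_tok_eq _ ctx0_w) |].
Qed.

End Block.

Lemma at_block_next (Y run : seq tok) (u w w2 : Vt) (q : int) (ws : seq Vt) :
  at_block Y u q [:: w, w2 & ws] -> all (isCtxOf w) run ->
  at_block (Y ++ run ++ [:: Vert w; TEq; Val (op c u w q); TCm]) w (op c u w q) (w2 :: ws).
Proof.
move=> Y_block run_w; case: (Y_block) => _ _ [pfx ch_u]; split.
- exact: (dlm_notin_block Y_block run_w).
- by exists (Y ++ run); rewrite -catA.
- by exists (rcons pfx u); rewrite cat_rcons.
Qed.

Lemma dec_greedy_from (ws : seq Vt) (Y : seq tok) (u w : Vt) (q : int) (out : seq tok) :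
  at_block Y u q (w :: ws) -> greedy_from (sentence Y) out ->
  dec out = zip (w :: ws) (chain_vals c u q (w :: ws)).
Proof.
elim: ws Y u w q out => [|w2 ws IH] Y u w q out Y_block;
  case/(greedy_from_block Y_block) => run [o [run_w -> g]];
  rewrite (dec_ctx_cat _ run_w) /=; congr (_ :: _).
  by case: o g => [|a o] //= [] /negP; rewrite (goal_done_value Y_block run_w).
case: o g => [|a o] /=; first by rewrite (goal_done_value Y_block run_w).
case=> _ /(next_tok_block_val Y u w q run a) ->; rewrite rcons_sentence -cats1 -!catA /=.
exact/IH/at_block_next.
Qed.

Lemma greedy_from_exists (ws : seq Vt) (Y : seq tok) (u w : Vt) (q : int) :
  at_block Y u q (w :: ws) -> exists out, greedy_from (sentence Y) out.
Proof.
elim: ws Y u w q => [|w2 ws IH] Y u w q Y_block;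
  have ctx0_w : all (isCtxOf w) [:: Ctx w 0] by rewrite /= eqxx.
  exists [:: Ctx w 0; Vert w; TEq; Val (op c u w q)]; rewrite -[X in greedy_from _ X]cats0.
  apply: (greedy_from_block_cat Y_block); exact: (goal_done_value Y_block ctx0_w).
have [out g] := IH _ _ _ _ (at_block_next Y_block ctx0_w).
exists ([:: Ctx w 0; Vert w; TEq; Val (op c u w q)] ++ TCm :: out).
apply: (greedy_from_block_cat Y_block); split.
- by rewrite (goal_done_value Y_block ctx0_w).
- exact/(next_tok_block_val Y u w q [:: Ctx w 0]).
- by rewrite rcons_sentence -cats1 -!catA.
Qed.

End Generation.

Lemma not_uniq_split (T : eqType) (s : seq T) :
  ~~ uniq s -> exists a y b d, s = a ++ y :: b ++ y :: d.
Proof.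
elim: s => [//|z s IHs] /=; rewrite negb_and negbK.
case/orP=> [/splitPr [b d] | /IHs [a [y [b [d ->]]]]].
  by exists [::], z, b, d.
by exists (z :: a), y, b, d.
Qed.

Lemma is_chainE (T : finType) (inV : pred T) (E : rel T) (s : seq T) :
  is_chain inV E s = [&& s != [::], all inV s & sorted E s].
Proof. by case: s. Qed.

(* a repeated vertex would let the chain run around the cycle once more *)
Lemma longest_chain_uniq (T : finType) (inV : pred T) (E : rel T) (N : nat) (s : seq T) :
  (forall ws, is_chain inV E ws -> (size ws <= N)%N) ->
  is_chain inV E s -> size s = N -> uniq s.
Proof.
move=> depthN chain_s size_s; apply: contraT => /not_uniq_split [a [y [b [d es]]]].
have /depthN : is_chain inV E (a ++ y :: b ++ y :: b ++ y :: d).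
  move: chain_s; rewrite !is_chainE es => /and3P [_ inV_s sorted_s].
  apply/and3P; split; first by case: a {es inV_s sorted_s}.
    move: inV_s; rewrite !all_cat /= !all_cat /= => /and5P [Va Vy Vb _ Vd].
    by rewrite all_cat /= Va Vy Vb Vd.
  move: sorted_s; rewrite !sorted_cat_cons !cat_path /= => /and4P [-> Pb Eb Pd].
  by rewrite cat_path /= Pb Eb Pd.
by rewrite -size_s es !size_cat /= size_cat /=; lia.
Qed.

Section TestSequences.
Variables (Vt : finType) (c : Vt -> Vt -> int) (vals : Vt -> seq int) (ncont : Vt -> nat).
Local Notation tok := (token Vt).

Lemma joincm_cons (b : seq tok) (bs : seq (seq tok)) :
  joincm (b :: bs) = b ++ (if bs is [::] then [::] else TCm :: joincm bs).
Proof. by case: bs => [|b' bs] //=; rewrite cats0. Qed.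

Lemma verts_joincm (bs : seq (seq tok)) : verts (joincm bs) = flatten [seq verts b | b <- bs].
Proof. by elim: bs => [|b bs IHbs] //; rewrite joincm_cons verts_cat /= -IHbs; case: bs {IHbs}. Qed.

Definition ctx_lists (ws : seq Vt) (css : seq (seq tok)) : bool :=
  all2 (fun w cs => all (isCtxOf w) cs) ws css.

Local Notation blocks_of ws css qs :=
  [seq p.1.2 ++ [:: Vert p.1.1; TEq; Val p.2] | p <- zip (zip ws css) qs].

Lemma verts_blocks (ws : seq Vt) (css : seq (seq tok)) (qs : seq int) :
  ctx_lists ws css -> size qs = size ws -> verts (joincm (blocks_of ws css qs)) = ws.
Proof.
rewrite verts_joincm.
elim: ws css qs => [|w ws IH] [|cs css] [|q qs] //= /andP [cs_w css_ws] [size_qs].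
by rewrite verts_cat (verts_ctx cs_w) IH.
Qed.

Lemma dec_blocks (ws : seq Vt) (css : seq (seq tok)) (qs : seq int) :
  ctx_lists ws css -> size qs = size ws -> dec (joincm (blocks_of ws css qs)) = zip ws qs.
Proof.
elim: ws css qs => [|w ws IH] [|cs css] [|q qs] //= /andP [cs_w css_ws] [size_qs].
by case: (blocks_of ws css qs) (IH css qs css_ws size_qs) => [|b bs] <-;
  rewrite -?catA (dec_ctx_cat _ cs_w).
Qed.

Lemma size_chain_vals (u : Vt) (q : int) (ws : seq Vt) : size (chain_vals c u q ws) = size ws.
Proof. by elim: ws u q => [|w ws IH] u q //=; rewrite IH. Qed.

Lemma shot_ctx_lists (v1 : Vt) (vs : seq Vt) (sh : int * seq (seq tok)) :
  shot_ok vals ncont v1 vs sh -> ctx_lists (v1 :: vs) sh.2.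
Proof.
case/and3P=> _ /eqP size_sh ok; rewrite /ctx_lists all2E size_sh eqxx /=.
by apply: sub_all ok => -[v cs] /and3P [_ _ /= cs_v]; apply: sub_all cs_v => t /CONT_isCtxOf.
Qed.

Lemma verts_processed (v1 : Vt) (vs : seq Vt) (sh : int * seq (seq tok)) :
  shot_ok vals ncont v1 vs sh -> verts (processed c v1 vs sh) = last v1 vs :: v1 :: vs.
Proof.
move=> sh_ok; rewrite /processed verts_cat /= verts_blocks ?shot_ctx_lists //=.
by rewrite size_chain_vals.
Qed.

Lemma flatten_dlm_rcons (A : Type) (f : A -> seq tok) (s : seq A) : (0 < size s)%N ->
  exists x, flatten [seq f a ++ [:: TDlm] | a <- s] = rcons x TDlm.
Proof.
case/lastP: s => [//|s a] _; rewrite map_rcons flatten_rcons.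
by exists (flatten [seq f a ++ [:: TDlm] | a <- s] ++ f a); rewrite -cats1 catA.
Qed.

End TestSequences.

Section TestInput.
Variables (Vt : finType) (c : Vt -> Vt -> int) (vals : Vt -> seq int) (ncont : Vt -> nat).
Variables (v1 : Vt) (vs : seq Vt).
Local Notation tok := (token Vt).
Local Notation shot_ok := (shot_ok vals ncont v1 vs).

Lemma verts_prev_shots (k : nat) (shots : seq (int * seq (seq tok))) :
  (0 < k <= size shots)%N -> all shot_ok shots ->
  exists x R, flatten [seq processed c v1 vs sh ++ [:: TDlm] | sh <- take k shots] = rcons x TDlm
    /\ verts (rcons x TDlm) = last v1 vs :: (v1 :: vs) ++ R.
Proof.
case: shots => [|sh0 shs]; first by case: k.
case: k => [//|k] _ /andP [sh0_ok _].
have [|x ex] := flatten_dlm_rcons (processed c v1 vs) (s := take k.+1 (sh0 :: shs)) => //.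
set rest := flatten [seq processed c v1 vs sh ++ [:: TDlm] | sh <- take k shs].
exists x, (verts rest); rewrite -ex; split=> //.
rewrite (_ : flatten _ = (processed c v1 vs sh0 ++ [:: TDlm]) ++ rest) //.
by rewrite -catA verts_cat (verts_processed _ sh0_ok).
Qed.

Lemma query_at_block (qs : int * seq (seq tok)) : shot_ok qs ->
  at_block (v1 :: vs) [:: TEq, TQu & head [::] (blocks c v1 vs qs) ++ [:: TCm]] v1 qs.1 vs.
Proof.
move/shot_ctx_lists; case: qs => q1 [|cs1 css] //= /andP [cs1_v1 _]; split.
- by rewrite !inE /= !mem_cat (negbTE (dlm_notin_ctx cs1_v1)).
- by exists [:: TEq, TQu & cs1]; rewrite -catA.
- by exists [::].
Qed.

Lemma dec_query_label (qs : int * seq (seq tok)) : shot_ok qs ->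
  dec (joincm (behead (blocks c v1 vs qs))) = zip vs (chain_vals c v1 qs.1 vs).
Proof.
move=> qs_ok; have := shot_ctx_lists qs_ok.
case: qs qs_ok => q1 [|cs1 css] /and3P [_ /eqP //= [size_css] _] /andP [_ css_vs].
by rewrite dec_blocks // size_chain_vals.
Qed.

End TestInput.

Theorem lemma2 (Vt : finType) (inV : pred Vt) (E : rel Vt) (c : Vt -> Vt -> int)
    (vals : Vt -> seq int) (ncont : Vt -> nat) (N K k : nat)
    (v1 : Vt) (vs : seq Vt) (shots : seq (int * seq (seq (token Vt)))) :
  (* G = (V, E) with V a subset of the alphabet *)
  (forall u v, E u v -> inV u && inV v) ->
  (* each op(e) maps VALS(v1) into VALS(v2) *)
  (forall u v q, E u v -> q \in vals u -> (op c u v q \in vals v)) ->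
  (* CONT(v) nonempty *)
  (forall v, (0 < ncont v)%N) ->
  (* N is the depth: the maximal chain length *)
  (forall ws, is_chain inV E ws -> (size ws <= N)%N) ->
  is_chain inV E (v1 :: vs) -> size (v1 :: vs) = N ->
  (2 <= N)%N ->
  (* (inp^k, lab^k) in the support of D_test, k >= 1 *)
  (1 <= k <= K)%N ->
  size shots = k.+1 ->
  all (shot_ok vals ncont v1 vs) shots ->
  let inp := test_input c k v1 vs shots in
  let lab := test_label c k v1 vs shots in
  (exists out, greedy_gen inV c vals ncont inp out) /\
  (forall out, greedy_gen inV c vals ncont inp out -> dec out = dec lab).
Proof.
case: vs => [|w ws]; first by move=> _ _ _ _ _ <-.
move=> _ _ ncont_gt0 depthN chain_s size_s _ /andP [k_gt0 _] size_shots shots_ok inp lab.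
set qs := nth (0%R, [::]) shots k.
have qs_ok : shot_ok vals ncont v1 (w :: ws) qs.
  by apply: (allP shots_ok); rewrite mem_nth // size_shots.
have k_le : (0 < k <= size shots)%N by rewrite k_gt0 size_shots leqnSn.
have [x [R [prev_x prev_verts]]] := verts_prev_shots c k_le shots_ok.
set Y := [:: TEq, TQu & head [::] (blocks c v1 (w :: ws) qs) ++ [:: TCm]].
have inpE : inp = sentence x (last v1 (w :: ws)) Y.
  by rewrite /inp /test_input prev_x /sentence cat_rcons.
have Y_block := query_at_block c qs_ok.
have s_uniq := longest_chain_uniq depthN chain_s size_s.
have s_inV : all inV (v1 :: w :: ws) by case/andP: chain_s.
rewrite /lab /test_label (dec_query_label c qs_ok) inpE; split.
  have [out g] := greedy_from_exists c vals prev_verts s_uniq (erefl _) s_inV ncont_gt0 Y_block.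
  by exists out; apply/greedy_genE.
move=> out /greedy_genE.
exact: (dec_greedy_from prev_verts s_uniq (erefl _) s_inV ncont_gt0 Y_block).
Qed.
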